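(* Let $k>1$ be an integer and let $q\in(0,1)$ be a fixed constant. Then there exists $c>0$ such that for a random fan $\Sigma$ chosen with respect to $T(h,1-q)$, with high probability $\delta_k(\Sigma)>c$.
   Context: A ray is a half-line $\rho=\mathbb{R}_{\ge 0}v\subset\mathbb{R}^2$ with $v\in\mathbb{Z}^2\setminus\{0\}$; $u_\rho$ is its primitive lattice generator. On $\mathbb{Z}^2$ use the norm $|(x,y)|=\max\{|x|,|y|\}$, and $|\rho|=|u_\rho|$. The completion of a finite set $S$ of rays is the fan with ray set $S$ that is maximal under inclusion among fans with ray set $S$ (its $2$-dimensional cones are spanned by angularly consecutive rays of $S$ at angle less than $\pi$). $T(h,p)$ is the distribution on fans obtained by including each ray $\rho$ with $|\rho|\le h$ independently with probability $p$ and completing. The singularity index of a $2$-dimensional cone spanned by $\rho,\tau$ is $|\det(u_\rho,u_\tau)|$. The $2$-dimensional cones of $\Sigma$ correspond to the torus-fixed points of $X(\Sigma)$. Define $\delta_k(\Sigma)$ as the number of $2$-dimensional cones of $\Sigma$ of singularity index at least $k$ divided by the total number of $2$-dimensional cones of $\Sigma$. ''With high probability'' means with probability tending to $1$ as $h\to\infty$. *)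

From Stdlib Require Import Reals ZArith List.
Import ListNotations.
Open Scope R_scope.

(** A ray is represented by its primitive lattice generator u = (x,y) in Z^2,
    i.e. gcd(x,y) = 1 (this excludes (0,0)). *)
Definition vec := (Z * Z)%type.

Definition norm (u : vec) : Z := Z.max (Z.abs (fst u)) (Z.abs (snd u)).

Definition det (u v : vec) : Z := (fst u * snd v - snd u * fst v)%Z.

Definition primitive (u : vec) : bool := Z.eqb (Z.gcd (fst u) (snd u)) 1.

Definition zrange (h : nat) : list Z :=
  map (fun i => (Z.of_nat i - Z.of_nat h)%Z) (seq 0 (2 * h + 1)).

Definition rays_upto (h : nat) : list vec :=
  filter primitive (list_prod (zrange h) (zrange h)).

(** The 2-dimensional cones of the completion of the ray set S:
    pairs (u,v) of rays of S that are angularly consecutive (counterclockwise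
    from u to v, no ray of S strictly in between) at angle less than pi
    (i.e. det(u,v) > 0). *)
Definition is_cone (S : list vec) (uv : vec * vec) : bool :=
  let (u, v) := uv in
  Z.ltb 0 (det u v) &&
  forallb (fun w => negb (Z.ltb 0 (det u w) && Z.ltb 0 (det w v))) S.

Definition cones (S : list vec) : list (vec * vec) :=
  filter (is_cone S) (list_prod S S).

Definition sing_index (uv : vec * vec) : Z := Z.abs (det (fst uv) (snd uv)).

(** delta_k: proportion of 2-dim cones of singularity index >= k
    (convention: 0 if there are no 2-dimensional cones). *)
Definition delta (k : Z) (S : list vec) : R :=
  let C := cones S in
  match C with
  | [] => 0
  | _ => INR (length (filter (fun c => Z.leb k (sing_index c)) C))
         / INR (length C)
  end.

Fixpoint subsets {A : Type} (l : list A) : list (list A) :=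
  match l with
  | [] => [[]]
  | a :: t => let r := subsets t in map (cons a) r ++ r
  end.

Definition prob_incl (p : R) (l : list vec) (E : list vec -> bool) : R :=
  fold_right Rplus 0
    (map (fun S => p ^ length S * (1 - p) ^ (length l - length S)
                   * (if E S then 1 else 0)) (subsets l)).

(** Probability, under T(h,p), that the random fan satisfies P
    (the fan is the completion of the random ray set S). *)
Definition prob_T (h : nat) (p : R) (P : list vec -> bool) : R :=
  prob_incl p (rays_upto h) P.

Definition gtb (x y : R) : bool := if Rlt_dec y x then true else false.

From Pilot Require Import Defs.
From Stdlib Require Import Reals ZArith List Lia Lra Psatz.
Import ListNotations.
Open Scope R_scope.

(* For a primitive w = (a, b) with 0 < b < a and 2ka <= h there are rays u, v with
   det(u, w) = det(w, v) = 1 whose first coordinates lie in (h - a, h].  Then w is the only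
   ray of norm at most h strictly between u and v, and det(u, v) = (u_1 + v_1) / a >= k; so
   whenever u and v are chosen and w is not, the fan has a cone of index at least k.
   Taking w = (x + y, y) for coprime x, y <= M ~ h / 4k gives at least M^2 / 4 such
   triples, pairwise disjoint, hence independent events of probability p^2 (1 - p).  By
   Chebyshev a constant fraction of them occur with high probability, while the fan has at
   most (2h + 1)^2 cones. *)

(** * Finite sums *)

Definition rsum {A : Type} (f : A -> R) (L : list A) : R := fold_right Rplus 0 (map f L).

Definition indb (b : bool) : R := if b then 1 else 0.

Lemma indb_bounds (b : bool) : 0 <= indb b <= 1.
Proof. destruct b; simpl; lra. Qed.

Lemma rsum_nil {A : Type} (f : A -> R) : rsum f [] = 0.
Proof. reflexivity. Qed.

Lemma rsum_cons {A : Type} (f : A -> R) a L : rsum f (a :: L) = f a + rsum f L.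
Proof. reflexivity. Qed.

Section Sums.
Context {A : Type}.
Implicit Types (f g : A -> R) (L : list A).

Lemma rsum_ext f g L : (forall x, In x L -> f x = g x) -> rsum f L = rsum g L.
Proof.
  induction L; intros H; rewrite ?rsum_nil, ?rsum_cons; auto.
  rewrite H, IHL; [reflexivity | intros; apply H | ]; simpl; auto.
Qed.

Lemma rsum_plus f g L : rsum (fun x => f x + g x) L = rsum f L + rsum g L.
Proof. induction L; rewrite ?rsum_nil, ?rsum_cons; [ring | rewrite IHL; ring]. Qed.

Lemma rsum_mulr f c L : rsum (fun x => f x * c) L = rsum f L * c.
Proof. induction L; rewrite ?rsum_nil, ?rsum_cons; [ring | rewrite IHL; ring]. Qed.

Lemma rsum_const c L : rsum (fun _ => c) L = INR (length L) * c.
Proof.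
  induction L; rewrite ?rsum_nil, ?rsum_cons; cbn [length]; [simpl; ring|].
  rewrite IHL, S_INR; ring.
Qed.

Lemma rsum_minus_const f c L : rsum (fun x => f x - c) L = rsum f L - INR (length L) * c.
Proof.
  rewrite (rsum_ext _ (fun x => f x + (fun _ => - c) x)), rsum_plus, rsum_const
    by (intros; ring).
  ring.
Qed.

Lemma rsum_le f g L : (forall x, In x L -> f x <= g x) -> rsum f L <= rsum g L.
Proof.
  induction L; intros H; rewrite ?rsum_nil, ?rsum_cons; [lra|].
  specialize (IHL (fun x Hx => H x (or_intror Hx))). specialize (H a (or_introl eq_refl)). lra.
Qed.

Lemma rsum_nonneg f L : (forall x, In x L -> 0 <= f x) -> 0 <= rsum f L.
Proof. intros H; rewrite <- (Rmult_0_r (INR (length L))), <- rsum_const; apply rsum_le, H. Qed.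

Lemma rsum_ge_term f L a : (forall x, In x L -> 0 <= f x) -> In a L -> f a <= rsum f L.
Proof.
  induction L as [|b L IH]; intros H Ha; [destruct Ha|]. rewrite rsum_cons.
  assert (0 <= f b) by (apply H; left; auto).
  assert (0 <= rsum f L) by (apply rsum_nonneg; intros; apply H; right; auto).
  destruct Ha as [->|Ha]; [lra|].
  specialize (IH (fun x Hx => H x (or_intror Hx)) Ha). lra.
Qed.

Lemma rsum_app f L1 L2 : rsum f (L1 ++ L2) = rsum f L1 + rsum f L2.
Proof. unfold rsum; rewrite map_app, fold_right_app. induction (map f L1); simpl; lra. Qed.

Lemma rsum_indb (P : A -> bool) L : rsum (fun x => indb (P x)) L = INR (length (filter P L)).
Proof.
  induction L; rewrite ?rsum_nil, ?rsum_cons; simpl; auto. rewrite IHL.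
  destruct (P a); cbn [length indb]; [rewrite S_INR|]; ring.
Qed.

Lemma rsum_sqr f L : rsum f L * rsum f L = rsum (fun x => rsum (fun y => f x * f y) L) L.
Proof.
  rewrite <- rsum_mulr. apply rsum_ext; intros x _.
  rewrite Rmult_comm, <- rsum_mulr. apply rsum_ext; intros; ring.
Qed.

Lemma rsum_single f L a : NoDup L -> In a L ->
  (forall x, In x L -> x <> a -> f x = 0) -> rsum f L = f a.
Proof.
  induction L as [|b L IH]; intros Hn Ha H; [destruct Ha|].
  inversion_clear Hn as [|? ? HbL HnL]. rewrite rsum_cons.
  destruct Ha as [<-|Ha].
  - rewrite (rsum_ext _ (fun _ => 0)), rsum_const; [ring|].
    intros x Hx; apply H; [right; auto|]. intros ->; auto.
  - rewrite (H b), (IH HnL Ha); [ring | | left; auto | intros ->; auto].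
    intros x Hx; apply H; right; auto.
Qed.

End Sums.

Lemma rsum_swap {A D : Type} (F : D -> A -> R) Ds L :
  rsum (fun d => rsum (F d) L) Ds = rsum (fun x => rsum (fun d => F d x) Ds) L.
Proof.
  induction Ds as [|d Ds IH]; rewrite ?rsum_nil, ?rsum_cons.
  - rewrite (rsum_ext (fun x => rsum (fun d => F d x) []) (fun _ => 0)), rsum_const by auto.
    ring.
  - rewrite IH, <- rsum_plus. reflexivity.
Qed.

Lemma rsum_union_bound {A D : Type} (P : A -> bool) (Q : D -> A -> bool) L Ds :
  (forall x, In x L -> P x = true -> exists d, In d Ds /\ Q d x = true) ->
  rsum (fun x => indb (P x)) L <= rsum (fun d => rsum (fun x => indb (Q d x)) L) Ds.
Proof.
  intros H. rewrite rsum_swap. apply rsum_le; intros x Hx.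
  assert (Hnn : forall d, In d Ds -> 0 <= indb (Q d x)) by (intros; apply indb_bounds).
  destruct (P x) eqn:EP; [|apply rsum_nonneg, Hnn].
  destruct (H x Hx EP) as [d [Hd HQ]].
  pose proof (rsum_ge_term (fun d => indb (Q d x)) Ds d Hnn Hd) as Hge.
  cbv beta in Hge; rewrite HQ in Hge. exact Hge.
Qed.

Lemma rsum_map {A B : Type} (f : B -> R) (g : A -> B) L :
  rsum f (map g L) = rsum (fun x => f (g x)) L.
Proof. unfold rsum; rewrite map_map; reflexivity. Qed.

Lemma rsum_prod {A B : Type} (F : A * B -> R) L1 L2 :
  rsum F (list_prod L1 L2) = rsum (fun a => rsum (fun b => F (a, b)) L2) L1.
Proof.
  induction L1; simpl; auto. rewrite rsum_app, rsum_map, rsum_cons, IHL1. reflexivity.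
Qed.

(** * Independent inclusion of the elements of a list *)

Section Bernoulli.
Context {A : Type} (A_eq_dec : forall x y : A, {x = y} + {x <> y}).
Implicit Types (p : R) (l S : list A) (f g : list A -> R).

Definition expect p l f : R :=
  rsum (fun S => p ^ length S * (1 - p) ^ (length l - length S) * f S) (subsets l).

Lemma subsets_length l S : In S (subsets l) -> (length S <= length l)%nat.
Proof.
  revert S; induction l as [|a t IH]; simpl; intros S H.
  - destruct H as [<-|[]]; simpl; lia.
  - apply in_app_or in H; destruct H as [H|H].
    + apply in_map_iff in H; destruct H as [S' [<- H]]; simpl; apply IH in H; lia.
    + apply IH in H; lia.
Qed.

Lemma subsets_incl l S : In S (subsets l) -> incl S l /\ (NoDup l -> NoDup S).
Proof.
  revert S; induction l as [|a t IH]; simpl; intros S H.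
  - destruct H as [<-|[]]; split; [intros x [] | constructor].
  - apply in_app_or in H; destruct H as [H|H].
    + apply in_map_iff in H as [S' [<- H]]. apply IH in H as [H1 H2]. split.
      * intros x [<-|Hx]; simpl; auto.
      * intros Hn; inversion Hn; subst; constructor; auto.
    + apply IH in H as [H1 H2]. split.
      * intros x Hx; simpl; auto.
      * intros Hn; inversion Hn; auto.
Qed.

Lemma expect_nil p f : expect p [] f = f [].
Proof. unfold expect; simpl; rewrite rsum_cons, rsum_nil; simpl; ring. Qed.

Lemma expect_cons p a t f :
  expect p (a :: t) f = p * expect p t (fun S => f (a :: S)) + (1 - p) * expect p t f.
Proof.
  unfold expect; cbn [subsets]. rewrite rsum_app, rsum_map, (Rmult_comm p), (Rmult_comm (1 - p)),
    <- !rsum_mulr.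
  f_equal; apply rsum_ext; intros T HT; apply subsets_length in HT; cbn [length].
  - simpl; ring.
  - replace (S (length t) - length T)%nat with (S (length t - length T)) by lia. simpl; ring.
Qed.

Lemma expect_ext p l f g : (forall S, f S = g S) -> expect p l f = expect p l g.
Proof. intros H; apply rsum_ext; intros; rewrite H; auto. Qed.

Lemma expect_const p l c : expect p l (fun _ => c) = c.
Proof. induction l; [apply expect_nil|]. rewrite expect_cons, IHl; ring. Qed.

Lemma expect_plus p l f g : expect p l (fun S => f S + g S) = expect p l f + expect p l g.
Proof.
  revert f g; induction l; intros f g; [rewrite !expect_nil; auto|].
  rewrite !expect_cons, IHl, (IHl f g); ring.
Qed.

Lemma expect_scal p l c f : expect p l (fun S => c * f S) = c * expect p l f.
Proof.
  revert f; induction l; intros f; [rewrite !expect_nil; auto|].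
  rewrite !expect_cons, IHl, (IHl f); ring.
Qed.

Lemma expect_minus p l f g : expect p l (fun S => f S - g S) = expect p l f - expect p l g.
Proof.
  rewrite (expect_ext p l _ (fun S => f S + (-1) * g S)) by (intros; ring).
  rewrite expect_plus, expect_scal; ring.
Qed.

Lemma expect_rsum {B : Type} p l (F : B -> list A -> R) L :
  expect p l (fun S => rsum (fun x => F x S) L) = rsum (fun x => expect p l (F x)) L.
Proof.
  induction L as [|x L IH].
  - exact (expect_const p l 0).
  - rewrite rsum_cons, <- IH, <- expect_plus. reflexivity.
Qed.

Lemma expect_le p l f g : 0 <= p <= 1 ->
  (forall S, In S (subsets l) -> f S <= g S) -> expect p l f <= expect p l g.
Proof.
  intros Hp; revert f g; induction l as [|a l IH]; intros f g H.
  - rewrite !expect_nil; apply H; simpl; auto.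
  - rewrite !expect_cons.
    assert (expect p l (fun S => f (a :: S)) <= expect p l (fun S => g (a :: S))).
    { apply IH; intros; apply H; simpl; apply in_or_app; left; apply in_map; auto. }
    assert (expect p l f <= expect p l g).
    { apply IH; intros; apply H; simpl; apply in_or_app; right; auto. }
    nra.
Qed.

Definition depends_only_on (D : list A) f :=
  forall S S', (forall x, In x D -> (In x S <-> In x S')) -> f S = f S'.

Lemma depends_only_on_cons_notin D f a : depends_only_on D f -> ~ In a D ->
  forall S, f (a :: S) = f S.
Proof.
  intros Hd Ha S; apply Hd; intros x Hx; simpl; split; intros H; auto.
  destruct H as [<-|H]; auto; contradiction.
Qed.

Lemma depends_only_on_cons D f a : depends_only_on D f -> depends_only_on D (fun S => f (a :: S)).
Proof. intros Hd S S' H; apply Hd; intros x Hx; simpl; specialize (H x Hx); tauto. Qed.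

Lemma expect_mul_indep p l f g D1 D2 :
  depends_only_on D1 f -> depends_only_on D2 g -> (forall x, In x D1 -> ~ In x D2) ->
  expect p l (fun S => f S * g S) = expect p l f * expect p l g.
Proof.
  intros Hf Hg Hdis; revert f g Hf Hg; induction l as [|a t IH]; intros f g Hf Hg.
  - rewrite !expect_nil; auto.
  - rewrite !expect_cons. destruct (in_dec A_eq_dec a D1) as [Ha|Ha].
    + pose proof (depends_only_on_cons_notin D2 g a Hg (Hdis a Ha)) as Hga.
      rewrite (expect_ext p t (fun S => f (a :: S) * g (a :: S)) (fun S => f (a :: S) * g S))
        by (intros; rewrite Hga; auto).
      rewrite (expect_ext p t (fun S => g (a :: S)) g) by auto.
      rewrite (IH (fun S => f (a :: S)) g), (IH f g) by auto using depends_only_on_cons.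
      ring.
    + pose proof (depends_only_on_cons_notin D1 f a Hf Ha) as Hfa.
      rewrite (expect_ext p t (fun S => f (a :: S) * g (a :: S)) (fun S => f S * g (a :: S)))
        by (intros; rewrite Hfa; auto).
      rewrite (expect_ext p t (fun S => f (a :: S)) f) by auto.
      rewrite (IH f (fun S => g (a :: S))), (IH f g) by auto using depends_only_on_cons.
      ring.
Qed.

Definition memb (a : A) S : bool := if in_dec A_eq_dec a S then true else false.

Lemma memb_In a S : memb a S = true <-> In a S.
Proof. unfold memb; destruct in_dec; split; auto; discriminate. Qed.

Lemma depends_only_on_memb a : depends_only_on [a] (fun S => indb (memb a S)).
Proof.
  intros S S' H; specialize (H a (or_introl eq_refl)).
  unfold memb; destruct (in_dec A_eq_dec a S), (in_dec A_eq_dec a S'); tauto.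
Qed.

Lemma expect_memb_notin p l a : ~ In a l -> expect p l (fun S => indb (memb a S)) = 0.
Proof.
  induction l as [|b t IH]; intros Ha.
  - rewrite expect_nil; reflexivity.
  - rewrite expect_cons, (expect_ext p t _ (fun S => indb (memb a S))), IH.
    + ring.
    + intros H; apply Ha; right; auto.
    + apply (depends_only_on_cons_notin [a] (fun S => indb (memb a S)));
        [apply depends_only_on_memb|].
      intros [->|[]]; apply Ha; left; auto.
Qed.

Lemma expect_memb p l a : NoDup l -> In a l -> expect p l (fun S => indb (memb a S)) = p.
Proof.
  induction l as [|b t IH]; intros Hnd Ha; [destruct Ha|].
  inversion_clear Hnd as [|? ? Hbt Hnd']. rewrite expect_cons.
  destruct (A_eq_dec a b) as [->|Hab].
  - rewrite (expect_ext p t (fun S => indb (memb b (b :: S))) (fun _ => 1)).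
    + rewrite expect_const, expect_memb_notin by auto; ring.
    + intros S; unfold memb; destruct in_dec as [|Hn]; auto. exfalso; apply Hn; left; auto.
  - rewrite (expect_ext p t _ (fun S => indb (memb a S))), IH.
    + ring.
    + auto.
    + destruct Ha as [->|Ha]; tauto.
    + apply (depends_only_on_cons_notin [a] (fun S => indb (memb a S)));
        [apply depends_only_on_memb|].
      intros [->|[]]; tauto.
Qed.

Lemma expect_chebyshev_lower p l (X : list A -> R) m a : 0 <= p <= 1 -> 0 < a ->
  expect p l (fun S => indb (gtb (m - a) (X S))) * (a * a) <=
  expect p l (fun S => (X S - m) * (X S - m)).
Proof.
  intros Hp Ha. rewrite Rmult_comm, <- expect_scal. apply expect_le; auto; intros S _.
  pose proof (Rle_0_sqr (X S - m)); unfold Rsqr in *.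
  unfold gtb; destruct Rlt_dec; simpl; [|lra].
  assert (0 < m - X S - a) by lra. nra.
Qed.

End Bernoulli.

Lemma prob_T_expect h p (P : list vec -> bool) :
  prob_T h p P = expect p (rays_upto h) (fun S => indb (P S)).
Proof. reflexivity. Qed.

(** * Rays of norm at most [h] and their cones *)

Definition vec_eq_dec (a b : vec) : {a = b} + {a <> b}.
Proof. decide equality; apply Z.eq_dec. Defined.

Open Scope Z_scope.

Lemma in_zrange h z : In z (zrange h) <-> - Z.of_nat h <= z <= Z.of_nat h.
Proof.
  unfold zrange; rewrite in_map_iff; split.
  - intros [i [<- Hi]]; apply in_seq in Hi; lia.
  - intros Hz; exists (Z.to_nat (z + Z.of_nat h)); split; [lia|]. apply in_seq; lia.
Qed.

Lemma in_rays_upto h u : In u (rays_upto h) <->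
  - Z.of_nat h <= fst u <= Z.of_nat h /\ - Z.of_nat h <= snd u <= Z.of_nat h /\
  Z.gcd (fst u) (snd u) = 1.
Proof.
  unfold rays_upto; rewrite filter_In; unfold Defs.primitive; rewrite Z.eqb_eq.
  destruct u as [x y]; unfold vec; rewrite (in_prod_iff (zrange h) (zrange h) x y), !in_zrange.
  tauto.
Qed.

Lemma NoDup_map_in {A B : Type} (f : A -> B) L : NoDup L ->
  (forall x y, In x L -> In y L -> f x = f y -> x = y) -> NoDup (map f L).
Proof.
  induction L as [|a L IH]; simpl; intros Hn Hi; constructor; inversion_clear Hn as [|? ? HaL HnL].
  - intros Hin; apply in_map_iff in Hin as [y [Hy Hy']].
    assert (y = a) by (apply Hi; auto). subst; tauto.
  - apply IH; auto.
Qed.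

Lemma NoDup_map_inv_eq {A B : Type} (f : A -> B) L x y : NoDup (map f L) ->
  In x L -> In y L -> f x = f y -> x = y.
Proof.
  induction L as [|a L IH]; simpl; intros Hn Hx Hy E; [destruct Hx|].
  inversion_clear Hn as [|? ? Ha HL].
  destruct Hx as [<-|Hx], Hy as [<-|Hy]; auto; exfalso; apply Ha.
  - rewrite E; apply in_map; auto.
  - rewrite <- E; apply in_map; auto.
Qed.

Lemma NoDup_list_prod {A B : Type} (l1 : list A) (l2 : list B) :
  NoDup l1 -> NoDup l2 -> NoDup (list_prod l1 l2).
Proof.
  induction l1 as [|a l IH]; simpl; intros H1 H2; [constructor|].
  inversion_clear H1 as [|? ? Hal Hl]. apply NoDup_app.
  - apply NoDup_map_in; auto. intros x y _ _ E; inversion E; auto.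
  - apply IH; auto.
  - intros [x y] Hx Hy. apply in_map_iff in Hx as [z [E _]]. inversion E; subst.
    apply in_prod_iff in Hy. tauto.
Qed.

Lemma NoDup_rays_upto h : NoDup (rays_upto h).
Proof.
  assert (Hz : NoDup (zrange h)) by (apply NoDup_map_in; [apply seq_NoDup | intros; lia]).
  apply NoDup_filter, NoDup_list_prod; exact Hz.
Qed.

Lemma length_rays_upto h : (length (rays_upto h) <= (2 * h + 1) * (2 * h + 1))%nat.
Proof.
  unfold rays_upto. eapply Nat.le_trans; [apply filter_length_le|].
  unfold vec; rewrite length_prod. unfold zrange; rewrite length_map, length_seq. lia.
Qed.

Lemma primitive_parallel_eq (u a b : vec) :
  Z.gcd (fst a) (snd a) = 1 -> Z.gcd (fst b) (snd b) = 1 ->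
  det a b = 0 -> 0 < det u a -> 0 < det u b -> a = b.
Proof.
  destruct u as [ux uy], a as [ax ay], b as [bx by0]; unfold det; simpl.
  intros Ha Hb Hd H1 H2.
  destruct (Z.gcd_bezout ax ay 1 Ha) as [s [t Hst]].
  set (l := s * bx + t * by0).
  assert (Hd' : ax * by0 = ay * bx) by lia.
  assert (Ex : bx = l * ax).
  { unfold l. transitivity (bx * (s * ax + t * ay)); [rewrite Hst; ring|].
    replace ((s * bx + t * by0) * ax) with (s * bx * ax + t * (ax * by0)) by ring.
    rewrite Hd'; ring. }
  assert (Ey : by0 = l * ay).
  { unfold l. transitivity (by0 * (s * ax + t * ay)); [rewrite Hst; ring|].
    replace ((s * bx + t * by0) * ay) with (s * (ay * bx) + t * by0 * ay) by ring.
    rewrite <- Hd'; ring. }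
  rewrite Ex, Ey, Z.gcd_mul_mono_l, Ha in Hb.
  assert (l > 0) by (rewrite Ex, Ey in H2; nia).
  assert (l = 1) by lia.
  rewrite Ex, Ey; f_equal; nia.
Qed.

Lemma cones_fst_unique h S u v v' : incl S (rays_upto h) ->
  In (u, v) (cones S) -> In (u, v') (cones S) -> v = v'.
Proof.
  intros HS H1 H2; unfold cones in *; apply filter_In in H1, H2.
  destruct H1 as [P1 C1], H2 as [P2 C2]. apply in_prod_iff in P1, P2.
  unfold is_cone in C1, C2; apply andb_prop in C1, C2.
  destruct C1 as [D1 F1], C2 as [D2 F2]; apply Z.ltb_lt in D1, D2.
  rewrite forallb_forall in F1, F2.
  destruct (Z.lt_trichotomy (det v v') 0) as [Hlt|[Heq|Hgt]].
  - specialize (F1 v' (proj2 P2)).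
    destruct (Z.ltb_spec 0 (det u v')), (Z.ltb_spec 0 (det v' v)); simpl in F1;
      try discriminate; unfold det in *; lia.
  - apply (primitive_parallel_eq u); auto; eapply in_rays_upto, HS; tauto.
  - specialize (F2 v (proj2 P1)).
    destruct (Z.ltb_spec 0 (det u v)), (Z.ltb_spec 0 (det v v')); simpl in F2;
      try discriminate; lia.
Qed.

Lemma length_cones_le h S : NoDup S -> incl S (rays_upto h) -> (length (cones S) <= length S)%nat.
Proof.
  intros Hn Hi. rewrite <- (length_map fst).
  apply NoDup_incl_length.
  - apply NoDup_map_in.
    + apply NoDup_filter, NoDup_list_prod; auto.
    + intros [a b] [c d] H1 H2 E; cbn [fst] in E; subst c.
      f_equal; eapply cones_fst_unique; eauto.
  - intros x Hx; apply in_map_iff in Hx as [[a b] [<- Hx]].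
    unfold cones in Hx; apply filter_In in Hx as [Hx _]; apply in_prod_iff in Hx; simpl; tauto.
Qed.

Lemma det_basis_decomp (a b z : vec) : det a b = 1 ->
  fst z = det z b * fst a + det a z * fst b /\ snd z = det z b * snd a + det a z * snd b.
Proof.
  destruct a as [ax ay], b as [bx by0], z as [zx zy]; unfold det; cbn [fst snd]; intros H.
  split.
  - transitivity (zx * (ax * by0 - ay * bx)); [rewrite H; ring | ring].
  - transitivity (zy * (ax * by0 - ay * bx)); [rewrite H; ring | ring].
Qed.

(** * Triples of rays whose middle ray hides a singular cone *)

Section SingularTriples.
Variables (h : nat) (k : Z).
Hypothesis k_ge2 : 2 <= k.

Definition singular_triple (t : vec * vec * vec) : Prop :=
  let '(u, w, v) := t in
  In u (rays_upto h) /\ In w (rays_upto h) /\ In v (rays_upto h) /\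
  det u w = 1 /\ det w v = 1 /\ 1 <= fst w /\ 2 * k * fst w <= Z.of_nat h /\
  Z.of_nat h < fst u + fst w /\ Z.of_nat h < fst v + fst w /\ 0 <= fst u /\ 0 <= fst v.

(* In the unimodular bases (u, w) and (w, v), a positive coefficient of z on u or on v
   would push its first coordinate above h; hence z is a multiple of w. *)
Lemma ray_between_is_middle u w v z : singular_triple (u, w, v) -> In z (rays_upto h) ->
  0 < det u z -> 0 < det z v -> z = w.
Proof.
  intros (Hu & Hw & Hv & Huw & Hwv & Hw1 & Hwh & Hu2 & Hv2 & Hu0 & Hv0) Hz H1 H2.
  destruct (det_basis_decomp u w z Huw) as [Ix _].
  destruct (det_basis_decomp w v z Hwv) as [Jx _].
  apply in_rays_upto in Hz as Hzb. apply in_rays_upto in Hw as Hwb.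
  assert (det z w <= 0) by (destruct (Z_le_gt_dec (det z w) 0); [auto | nia]).
  assert (det w z <= 0) by (destruct (Z_le_gt_dec (det w z) 0); [auto | nia]).
  apply (primitive_parallel_eq u); try tauto; unfold det in *; lia.
Qed.

Lemma singular_triple_det u w v : singular_triple (u, w, v) -> k <= det u v.
Proof.
  intros (_ & _ & _ & Huw & Hwv & Hw1 & Hwh & Hu2 & Hv2 & Hu0 & Hv0).
  assert (E : det u v * fst w = fst u + fst v).
  { destruct u as [ux uy], w as [wx wy], v as [vx vy]; unfold det in *; cbn [fst snd] in *; nia. }
  nia.
Qed.

Lemma singular_cone_of_missing_middle u w v S : singular_triple (u, w, v) ->
  incl S (rays_upto h) -> In u S -> In v S -> ~ In w S ->
  In (u, v) (cones S) /\ k <= sing_index (u, v).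
Proof.
  intros Hg HS Hu Hv Hw.
  pose proof (singular_triple_det u w v Hg) as Hd.
  split; [|unfold sing_index; simpl; lia].
  unfold cones; apply filter_In; split; [apply in_prod; auto|].
  unfold is_cone; apply andb_true_intro; split; [apply Z.ltb_lt; lia|].
  apply forallb_forall; intros z Hz.
  destruct (Z.ltb_spec 0 (det u z)), (Z.ltb_spec 0 (det z v)); simpl; auto.
  exfalso; apply Hw. rewrite <- (ray_between_is_middle u w v z); auto.
Qed.

Lemma singular_triple_coords u w v : singular_triple (u, w, v) ->
  1 <= fst w /\ 4 * fst w <= Z.of_nat h /\ 4 * fst u > 3 * Z.of_nat h /\
  4 * fst v > 3 * Z.of_nat h /\ det u w = 1 /\ det w v = 1.
Proof. intros (_ & _ & _ & Huw & Hwv & Hw1 & Hwh & Hu2 & Hv2 & _). nia. Qed.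

Lemma singular_triple_distinct u w v : singular_triple (u, w, v) ->
  u <> w /\ w <> v /\ u <> v.
Proof.
  intros Hg; destruct (singular_triple_coords u w v Hg) as (_ & _ & _ & _ & H1 & H2).
  repeat split; intros ->; unfold det in *; lia.
Qed.

(* The decompositions of the second middle ray in the bases (u, w) and (w, v) force
   a first coordinate either above h/4 or negative unless the two middles agree. *)
Lemma singular_triples_disjoint u w v u' w' v' :
  singular_triple (u, w, v) -> singular_triple (u', w', v') -> w <> w' ->
  forall x, In x [u; w; v] -> ~ In x [u'; w'; v'].
Proof.
  intros G G' Hne x Hx Hx'.
  destruct (singular_triple_coords u w v G) as (A1 & A2 & A3 & A4 & A5 & A6).
  destruct (singular_triple_coords u' w' v' G') as (B1 & B2 & B3 & B4 & B5 & B6).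
  destruct (det_basis_decomp u w w' A5) as [Ux Uy].
  destruct (det_basis_decomp w v w' A6) as [Vx Vy].
  destruct Hx as [<-|[<-|[<-|[]]]]; destruct Hx' as [E|[E|[E|[]]]]; subst; try lia;
    try congruence.
  - destruct (Z.lt_trichotomy (det w' w) 0) as [L|[L|L]]; [nia| |nia].
    rewrite L, B5 in *. apply Hne. destruct w, w'; cbn [fst snd] in *; f_equal; lia.
  - assert (det u w' = -1) by (unfold det in *; lia).
    destruct (Z_le_gt_dec (det w' w) 0); nia.
  - assert (det w' v = -1) by (unfold det in *; lia).
    destruct (Z_le_gt_dec (det w w') 0); nia.
  - destruct (Z.lt_trichotomy (det w w') 0) as [L|[L|L]]; [nia| |nia].
    rewrite L, B6 in *. apply Hne. destruct w, w'; cbn [fst snd] in *; f_equal; lia.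
Qed.

(* u and v are the two rays adjacent to w (det = 1) whose first coordinate lies in
   (h - fst w, h]; they are found by shifting a Bezout solution along w. *)
Lemma singular_triple_exists wx wy : 1 <= wy < wx -> Z.gcd wx wy = 1 ->
  2 * k * wx <= Z.of_nat h -> exists u v, singular_triple (u, (wx, wy), v).
Proof.
  intros Hw Hg Hh.
  set (hz := Z.of_nat h) in *.
  assert (H4 : 4 * wx <= hz) by nia.
  destruct (Z.gcd_bezout wx wy 1 Hg) as [s [t Hst]].
  set (j := (hz - t) / wx). set (j' := (hz + t) / wx).
  pose proof (Z.div_mod (hz - t) wx ltac:(lia)) as Hd1.
  pose proof (Z.mod_pos_bound (hz - t) wx ltac:(lia)) as Hr.
  pose proof (Z.div_mod (hz + t) wx ltac:(lia)) as Hd2.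
  pose proof (Z.mod_pos_bound (hz + t) wx ltac:(lia)) as Hr'.
  fold j in Hd1; fold j' in Hd2.
  set (ux := t + j * wx). set (uy := - s + j * wy).
  set (vx := - t + j' * wx). set (vy := s + j' * wy).
  assert (Eux : ux = hz - (hz - t) mod wx) by (unfold ux; lia).
  assert (Evx : vx = hz - (hz + t) mod wx) by (unfold vx; lia).
  assert (Duw : ux * wy - uy * wx = 1) by (unfold ux, uy; rewrite <- Hst; ring).
  assert (Dwv : wx * vy - wy * vx = 1) by (unfold vx, vy; rewrite <- Hst; ring).
  clearbody ux uy vx vy.
  assert (0 <= uy <= ux)
    by (split; [destruct (Z_le_gt_dec 0 uy) | destruct (Z_le_gt_dec uy ux)]; nia).
  assert (0 <= vy <= vx)
    by (split; [destruct (Z_le_gt_dec 0 vy) | destruct (Z_le_gt_dec vy vx)]; nia).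
  exists (ux, uy), (vx, vy). unfold singular_triple; cbn [fst snd].
  repeat split; try (unfold det; cbn [fst snd]; lia); try lia.
  - apply in_rays_upto; cbn [fst snd]; repeat split; try lia.
    apply Z.bezout_1_gcd. exists wy, (- wx). lia.
  - apply in_rays_upto; cbn [fst snd]; repeat split; try lia.
  - apply in_rays_upto; cbn [fst snd]; repeat split; try lia.
    apply Z.bezout_1_gcd. exists (- wy), wx. lia.
Qed.

End SingularTriples.

Close Scope Z_scope.

(** * At least a quarter of the pairs in [1, M]^2 are coprime *)

Definition Zrange1 (M : nat) : list Z := map Z.of_nat (seq 1 M).

Definition grid (M : nat) : list (Z * Z) := list_prod (Zrange1 M) (Zrange1 M).

Definition coprimeb (p : Z * Z) : bool := (Z.gcd (fst p) (snd p) =? 1)%Z.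

Definition divb (d x : Z) : bool := (x mod d =? 0)%Z.

Definition common_divb (d : Z) (p : Z * Z) : bool := divb d (fst p) && divb d (snd p).

Lemma in_Zrange1 M x : In x (Zrange1 M) <-> (1 <= x <= Z.of_nat M)%Z.
Proof.
  unfold Zrange1; rewrite in_map_iff; split.
  - intros [i [<- Hi]]; apply in_seq in Hi; lia.
  - intros H; exists (Z.to_nat x); split; [lia|]; apply in_seq; lia.
Qed.

Lemma NoDup_Zrange1 M : NoDup (Zrange1 M).
Proof. apply NoDup_map_in; [apply seq_NoDup | intros; lia]. Qed.

Lemma length_grid M : length (grid M) = (M * M)%nat.
Proof. unfold grid, Zrange1; rewrite length_prod, length_map, length_seq; reflexivity. Qed.

Lemma count_multiples M d : (1 <= d)%Z ->
  INR (length (filter (divb d) (Zrange1 M))) * IZR d <= INR M.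
Proof.
  intros Hd. set (q := (Z.of_nat M / d)%Z).
  assert (Hq : (d * q <= Z.of_nat M)%Z) by (apply Z.mul_div_le; lia).
  assert (0 <= q)%Z by (apply Z.div_pos; lia).
  assert (Hl : (length (filter (divb d) (Zrange1 M)) <= Z.to_nat q)%nat).
  { replace (Z.to_nat q) with (length (map (fun j => d * j)%Z (Zrange1 (Z.to_nat q))))
      by (unfold Zrange1; rewrite !length_map, length_seq; auto).
    apply NoDup_incl_length.
    - apply NoDup_filter, NoDup_Zrange1.
    - intros x Hx. apply filter_In in Hx as [Hx Hm]. apply in_Zrange1 in Hx.
      unfold divb in Hm; apply Z.eqb_eq in Hm.
      apply in_map_iff. exists (x / d)%Z. split.
      + symmetry; apply Z.div_exact; lia.
      + apply in_Zrange1. pose proof (proj2 (Z.div_exact x d ltac:(lia)) Hm).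
        assert (x / d <= q)%Z by (apply Z.div_le_mono; lia). nia. }
  apply le_INR in Hl. rewrite !INR_IZR_INZ, Z2Nat.id in Hl by lia.
  apply IZR_le in Hq. rewrite mult_IZR in Hq. rewrite !INR_IZR_INZ.
  assert (0 < IZR d) by (apply IZR_lt; lia). nra.
Qed.

Lemma count_common_multiples M d : (1 <= d)%Z ->
  rsum (fun x => indb (common_divb d x)) (grid M) <=
  INR M * INR M * / (IZR d * IZR d).
Proof.
  intros Hd. unfold grid. rewrite rsum_prod.
  rewrite (rsum_ext _ (fun a => indb (divb d a) * rsum (fun b => indb (divb d b)) (Zrange1 M))).
  2:{ intros a _. rewrite Rmult_comm, <- rsum_mulr. apply rsum_ext; intros b _.
      unfold common_divb; cbn [fst snd]; destruct (divb d a), (divb d b); simpl; ring. }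
  rewrite rsum_mulr, !rsum_indb.
  pose proof (count_multiples M d Hd) as Hc.
  set (c := INR (length (filter (divb d) (Zrange1 M)))) in *.
  assert (0 <= c) by apply pos_INR.
  assert (1 <= IZR d) by (apply IZR_le; lia).
  assert (c <= INR M / IZR d) by (apply Rmult_le_reg_r with (IZR d); [lra|]; field_simplify; lra).
  replace (INR M * INR M * / (IZR d * IZR d)) with ((INR M / IZR d) * (INR M / IZR d))
    by (field; lra).
  nra.
Qed.

Lemma sum_inv_sqr_le a n : (2 <= a)%nat ->
  rsum (fun m => / (INR m * INR m)) (seq a n) <= / (INR a - 1) - / (INR (a + n) - 1).
Proof.
  revert a; induction n; intros a Ha; cbn [seq]; rewrite ?rsum_nil, ?rsum_cons.
  - rewrite Nat.add_0_r; lra.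
  - specialize (IHn (S a) ltac:(lia)). rewrite Nat.add_succ_l, !S_INR in IHn.
    rewrite Nat.add_succ_r, S_INR.
    assert (2 <= INR a) by (apply (le_INR 2); lia).
    assert (/ (INR a - 1) - / (INR a + 1 - 1) - / (INR a * INR a)
            = / (INR a * INR a * (INR a - 1))) by (field; lra).
    assert (0 < / (INR a * INR a * (INR a - 1))) by (apply Rinv_0_lt_compat; nra).
    lra.
Qed.

Lemma sum_inv_sqr_from2_le M : rsum (fun m => / (INR m * INR m)) (seq 2 M) <= 3 / 4.
Proof.
  destruct M as [|M]; cbn [seq]; [rewrite rsum_nil; lra|]. rewrite rsum_cons.
  pose proof (sum_inv_sqr_le 3 M ltac:(lia)) as Hs.
  assert (Hpos : 0 < INR (3 + M) - 1) by (rewrite plus_INR; simpl; pose proof (pos_INR M); lra).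
  pose proof (Rinv_0_lt_compat _ Hpos).
  replace (INR 3) with 3 in Hs by (simpl; ring). replace (INR 2) with 2 by (simpl; ring).
  lra.
Qed.

Lemma common_divisor_of_noncoprime M x : In x (grid M) -> negb (coprimeb x) = true ->
  exists d, In d (map Z.of_nat (seq 2 M)) /\ common_divb d x = true.
Proof.
  destruct x as [x y]; intros Hxy Hn.
  unfold grid in Hxy; apply in_prod_iff in Hxy as [Hx Hy]; apply in_Zrange1 in Hx, Hy.
  unfold coprimeb in Hn; cbn [fst snd] in Hn; apply Bool.negb_true_iff, Z.eqb_neq in Hn.
  assert (Z.gcd x y <> 0)%Z by (rewrite Z.gcd_eq_0; lia).
  assert (0 <= Z.gcd x y)%Z by apply Z.gcd_nonneg.
  assert (Z.gcd x y <= x)%Z by (apply Z.divide_pos_le; [lia | apply Z.gcd_divide_l]).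
  exists (Z.gcd x y); split.
  - apply in_map_iff; exists (Z.to_nat (Z.gcd x y)); split; [lia|]. apply in_seq; lia.
  - unfold common_divb, divb; cbn [fst snd].
    apply andb_true_intro; split; apply Z.eqb_eq, Z.mod_divide; auto.
    + apply Z.gcd_divide_l.
    + apply Z.gcd_divide_r.
Qed.

(* A non-coprime pair has a common divisor d in [2, M], and sum_(d >= 2) 1/d^2 <= 1/4 + 1/2. *)
Lemma count_noncoprime_pairs M :
  rsum (fun x => indb (negb (coprimeb x))) (grid M) <= 3 / 4 * (INR M * INR M).
Proof.
  eapply Rle_trans.
  { apply (rsum_union_bound _ common_divb _ (map Z.of_nat (seq 2 M))).
    apply common_divisor_of_noncoprime. }
  rewrite rsum_map.
  eapply Rle_trans.
  { apply rsum_le with (g := fun m => / (INR m * INR m) * (INR M * INR M)).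
    intros m Hm; apply in_seq in Hm. rewrite Rmult_comm, (INR_IZR_INZ m).
    apply count_common_multiples; lia. }
  rewrite rsum_mulr. apply Rmult_le_compat_r; [apply Rmult_le_pos; apply pos_INR|].
  apply sum_inv_sqr_from2_le.
Qed.

Lemma count_coprime_pairs M : INR M * INR M <= 4 * INR (length (filter coprimeb (grid M))).
Proof.
  rewrite <- rsum_indb.
  assert (Htot : rsum (fun x => indb (coprimeb x)) (grid M) +
                 rsum (fun x => indb (negb (coprimeb x))) (grid M) = INR M * INR M).
  { rewrite <- rsum_plus, (rsum_ext _ (fun _ => 1)), rsum_const, length_grid, mult_INR; [ring|].
    intros x _; destruct (coprimeb x); simpl; ring. }
  pose proof (count_noncoprime_pairs M). lra.
Qed.

(** * Many disjoint singular triples *)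

Definition middle_rays (M : nat) : list vec :=
  map (fun p => (fst p + snd p, snd p)%Z) (filter coprimeb (grid M)).

Lemma NoDup_middle_rays M : NoDup (middle_rays M).
Proof.
  apply NoDup_map_in.
  - apply NoDup_filter, NoDup_list_prod; apply NoDup_Zrange1.
  - intros [a b] [c d] _ _ E; cbn [fst snd] in E; inversion E; f_equal; lia.
Qed.

Lemma in_middle_rays M w : In w (middle_rays M) ->
  (1 <= snd w < fst w)%Z /\ (fst w <= 2 * Z.of_nat M)%Z /\ Z.gcd (fst w) (snd w) = 1%Z.
Proof.
  unfold middle_rays; intros H; apply in_map_iff in H as [[x y] [<- H]].
  apply filter_In in H as [H Hc]. unfold grid in H; apply in_prod_iff in H as [Hx Hy].
  apply in_Zrange1 in Hx, Hy. unfold coprimeb in Hc; cbn [fst snd] in *. apply Z.eqb_eq in Hc.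
  repeat split; try lia.
  rewrite Z.gcd_comm, Z.gcd_add_diag_r, Z.gcd_comm; auto.
Qed.

Definition mid (t : vec * vec * vec) : vec := let '(u, w, v) := t in w.

Lemma choose_triples (P : vec * vec * vec -> Prop) L :
  (forall w, In w L -> exists u v, P (u, w, v)) ->
  exists T, map mid T = L /\ forall t, In t T -> P t.
Proof.
  induction L as [|w L IH]; intros H.
  - exists []; split; [reflexivity | intros t []].
  - destruct (H w (or_introl eq_refl)) as [u [v G]].
    destruct IH as [T [E HT]]; [intros; apply H; right; auto|].
    exists ((u, w, v) :: T); simpl; split; [rewrite E; auto|].
    intros t [<-|Ht]; auto.
Qed.

Lemma singular_triples_for_middle_rays h k M : (2 <= k)%Z ->
  (4 * Z.to_nat k * M <= h)%nat ->
  exists T, map mid T = middle_rays M /\ forall t, In t T -> singular_triple h k t.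
Proof.
  intros Hk HM. apply choose_triples; intros [wx wy] Hw.
  apply in_middle_rays in Hw as (A1 & A2 & A3); cbn [fst snd] in *.
  apply singular_triple_exists; auto.
  apply Nat2Z.inj_le in HM. rewrite !Nat2Z.inj_mul, Z2Nat.id in HM by lia. nia.
Qed.

Definition missing_middle (t : vec * vec * vec) (S : list vec) : bool :=
  let '(u, w, v) := t in memb vec_eq_dec u S && memb vec_eq_dec v S && negb (memb vec_eq_dec w S).

Lemma indb_missing_middle u w v S : indb (missing_middle (u, w, v) S) =
  indb (memb vec_eq_dec u S) * indb (memb vec_eq_dec v S) * (1 - indb (memb vec_eq_dec w S)).
Proof. simpl; destruct (memb _ u S), (memb _ v S), (memb _ w S); simpl; ring. Qed.

Lemma depends_only_on_missing_middle u w v :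
  depends_only_on [u; w; v] (fun S => indb (missing_middle (u, w, v) S)).
Proof.
  intros S S' E. rewrite !indb_missing_middle.
  assert (Hm : forall a, In a [u; w; v] ->
                 indb (memb vec_eq_dec a S) = indb (memb vec_eq_dec a S')).
  { intros a Ha; apply depends_only_on_memb; intros x [<-|[]]; auto. }
  rewrite (Hm u), (Hm v), (Hm w); simpl; auto.
Qed.

Section ManyTriples.
Variables (h : nat) (k : Z) (T : list (vec * vec * vec)).
Hypothesis k_ge2 : (2 <= k)%Z.
Hypothesis T_singular : forall t, In t T -> singular_triple h k t.
Hypothesis T_mid_NoDup : NoDup (map mid T).

Lemma count_missing_middle_le S : incl S (rays_upto h) ->
  (length (filter (fun t => missing_middle t S) T) <=
   length (filter (fun c => Z.leb k (sing_index c)) (cones S)))%nat.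
Proof.
  intros HS.
  set (uv := fun t : vec * vec * vec => let '(u, w, v) := t in (u, v)).
  rewrite <- (length_map uv). apply NoDup_incl_length.
  - apply NoDup_map_in.
    + apply NoDup_filter. eapply NoDup_map_inv; eauto.
    + intros [[u w] v] [[u' w'] v'] H1 H2 E. apply filter_In in H1 as [H1 _], H2 as [H2 _].
      simpl in E; inversion E; subst u' v'.
      destruct (vec_eq_dec w w') as [<-|Hne]; [reflexivity|].
      exfalso. apply (singular_triples_disjoint h k k_ge2 u w v u w' v (T_singular _ H1)
        (T_singular _ H2) Hne u); simpl; auto.
  - intros x Hx. apply in_map_iff in Hx as [[[u w] v] [<- Hx]].
    apply filter_In in Hx as [Hx Hev]. cbn [missing_middle] in Hev.
    apply andb_prop in Hev as [Hev Hw]. apply andb_prop in Hev as [Hu Hv].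
    apply memb_In in Hu, Hv. apply Bool.negb_true_iff in Hw.
    destruct (singular_cone_of_missing_middle h k k_ge2 u w v S) as [C1 C2]; auto.
    + intros Hin; apply (memb_In vec_eq_dec) in Hin; congruence.
    + apply filter_In; split; auto. apply Z.leb_le; auto.
Qed.

Lemma expect_missing_middle p t : In t T ->
  expect p (rays_upto h) (fun S => indb (missing_middle t S)) = p * p * (1 - p).
Proof.
  destruct t as [[u w] v]; intros Ht. pose proof (T_singular _ Ht) as G.
  destruct (singular_triple_distinct h k k_ge2 u w v G) as (D1 & D2 & D3).
  destruct G as (Hu & Hw & Hv & _).
  rewrite (expect_ext _ _ _ (fun S => (indb (memb vec_eq_dec u S) * indb (memb vec_eq_dec v S))
                                       * (1 - indb (memb vec_eq_dec w S))))
    by (intros; apply indb_missing_middle).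
  rewrite (expect_mul_indep vec_eq_dec p _ _ _ [u; v] [w]).
  - rewrite (expect_mul_indep vec_eq_dec p _ _ _ [u] [v]), expect_minus, expect_const,
      !expect_memb
      by (auto using NoDup_rays_upto, depends_only_on_memb; intros x [<-|[]] [E|[]]; auto).
    reflexivity.
  - intros S S' E. rewrite (depends_only_on_memb _ u S S'), (depends_only_on_memb _ v S S'); auto;
      intros x [<-|[]]; apply E; simpl; auto.
  - intros S S' E. rewrite (depends_only_on_memb _ w S S' E); reflexivity.
  - intros x [<-|[<-|[]]] [E|[]]; subst; auto.
Qed.

Lemma covariance_missing_middle p t t' : In t T -> In t' T -> t <> t' ->
  expect p (rays_upto h) (fun S => (indb (missing_middle t S) - p * p * (1 - p)) *
                                   (indb (missing_middle t' S) - p * p * (1 - p))) = 0.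
Proof.
  intros Ht Ht' Hne.
  assert (Hw : mid t <> mid t') by (intros E; apply Hne; eapply NoDup_map_inv_eq; eauto).
  destruct t as [[u w] v], t' as [[u' w'] v'].
  rewrite (expect_mul_indep vec_eq_dec p _ _ _ [u; w; v] [u'; w'; v']).
  - rewrite expect_minus, expect_const, expect_missing_middle by auto. ring.
  - intros S S' E. rewrite (depends_only_on_missing_middle u w v S S' E); reflexivity.
  - intros S S' E. rewrite (depends_only_on_missing_middle u' w' v' S S' E); reflexivity.
  - exact (singular_triples_disjoint h k k_ge2 u w v u' w' v' (T_singular _ Ht)
             (T_singular _ Ht') Hw).
Qed.

Definition num_missing_middle (S : list vec) : R := rsum (fun t => indb (missing_middle t S)) T.

Lemma variance_num_missing_middle p : 0 <= p <= 1 ->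
  expect p (rays_upto h) (fun S =>
    (num_missing_middle S - INR (length T) * (p * p * (1 - p))) *
    (num_missing_middle S - INR (length T) * (p * p * (1 - p)))) <= INR (length T).
Proof.
  intros Hp. set (mu := p * p * (1 - p)).
  set (F := fun t t' S => (indb (missing_middle t S) - mu) * (indb (missing_middle t' S) - mu)).
  rewrite (expect_ext _ _ _ (fun S => rsum (fun t => rsum (fun t' => F t t' S) T) T))
    by (intros S; unfold num_missing_middle; rewrite <- rsum_minus_const; apply rsum_sqr).
  rewrite (expect_rsum p _ (fun t S => rsum (fun t' => F t t' S) T)).
  rewrite <- (Rmult_1_r (INR (length T))), <- rsum_const.
  apply rsum_le; intros t Ht.
  rewrite (expect_rsum p _ (F t)), (rsum_single _ T t).
  - rewrite <- (expect_const p (rays_upto h) 1). apply expect_le; auto; intros S _.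
    pose proof (indb_bounds (missing_middle t S)).
    assert (0 <= mu <= 1) by (unfold mu; nra).
    unfold F; nra.
  - eapply NoDup_map_inv; eauto.
  - auto.
  - intros t' Ht' Hne; apply covariance_missing_middle; auto.
Qed.

Lemma prob_few_missing_middle p : 0 < p < 1 -> (0 < length T)%nat ->
  expect p (rays_upto h) (fun S =>
    indb (gtb (INR (length T) * (p * p * (1 - p)) / 2) (num_missing_middle S)))
  <= 4 / (INR (length T) * (p * p * (1 - p)) ^ 2).
Proof.
  intros Hp Hn. set (n := INR (length T)). set (mu := p * p * (1 - p)).
  assert (0 < n) by (apply lt_0_INR; auto).
  assert (0 < mu) by (unfold mu; apply Rmult_lt_0_compat; nra).
  pose proof (expect_chebyshev_lower p (rays_upto h) num_missing_middle
                (n * mu) (n * mu / 2) ltac:(lra) ltac:(nra)) as Hc.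
  replace (n * mu - n * mu / 2) with (n * mu / 2) in Hc by field.
  pose proof (variance_num_missing_middle p ltac:(lra)) as Hv. fold n mu in Hv.
  assert (0 < n * mu) by (apply Rmult_lt_0_compat; auto).
  apply Rmult_le_reg_r with (n * mu / 2 * (n * mu / 2)); [nra|].
  replace (4 / (n * mu ^ 2) * (n * mu / 2 * (n * mu / 2))) with n by (field; lra).
  lra.
Qed.

End ManyTriples.

(** * The proportion of singular cones *)

Lemma count_singular_le_delta k S N : (length (cones S) <= N)%nat ->
  INR (length (filter (fun c => Z.leb k (sing_index c)) (cones S))) <= delta k S * INR N.
Proof.
  intros HN. unfold delta.
  pose proof (filter_length_le (fun c => Z.leb k (sing_index c)) (cones S)) as Hf.
  destruct (cones S) as [|c C]; [simpl; lra|].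
  apply le_INR in HN, Hf. set (L := INR (length (c :: C))) in *.
  assert (0 < L) by (apply lt_0_INR; simpl; lia).
  set (s := INR (length (filter (fun c => Z.leb k (sing_index c)) (c :: C)))) in *.
  assert (0 <= s / L).
  { unfold Rdiv; apply Rmult_le_pos; [apply pos_INR | apply Rlt_le, Rinv_0_lt_compat; lra]. }
  apply Rle_trans with (s / L * L); [right; field; lra | apply Rmult_le_compat_l; lra].
Qed.

Lemma num_missing_middle_le_delta h k T S : (2 <= k)%Z ->
  (forall t, In t T -> singular_triple h k t) -> NoDup (map mid T) ->
  incl S (rays_upto h) -> NoDup S ->
  num_missing_middle T S <= delta k S * INR ((2 * h + 1) * (2 * h + 1)).
Proof.
  intros Hk HT Hn HS HnS. unfold num_missing_middle. rewrite rsum_indb.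
  eapply Rle_trans; [apply le_INR, (count_missing_middle_le h k T Hk HT Hn S HS)|].
  apply count_singular_le_delta.
  eapply Nat.le_trans; [apply (length_cones_le h); auto|].
  eapply Nat.le_trans; [apply NoDup_incl_length; eauto|apply length_rays_upto].
Qed.

Lemma delta_gt_of_many_missing_middle h k M T S mu : (2 <= k)%Z -> (1 <= M)%nat ->
  (2 * h + 1 <= 16 * Z.to_nat k * M)%nat ->
  (forall t, In t T -> singular_triple h k t) -> NoDup (map mid T) ->
  incl S (rays_upto h) -> NoDup S -> 0 < mu ->
  INR M * INR M * mu <= 8 * num_missing_middle T S ->
  mu / (4096 * IZR k * IZR k) < delta k S.
Proof.
  intros Hk HM Hh HT Hn HS HnS Hmu HX.
  pose proof (num_missing_middle_le_delta h k T S Hk HT Hn HS HnS) as Hd.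
  set (K := INR (Z.to_nat k)).
  assert (HK : IZR k = K) by (unfold K; rewrite INR_IZR_INZ, Z2Nat.id by lia; reflexivity).
  assert (HK2 : 2 <= K) by (rewrite <- HK; apply IZR_le; auto).
  assert (HM1 : 1 <= INR M) by (apply (le_INR 1); auto).
  assert (Hbox : INR ((2 * h + 1) * (2 * h + 1)) <= 256 * (K * K) * (INR M * INR M)).
  { apply le_INR in Hh. rewrite !mult_INR in *. unfold K.
    replace (INR 16) with 16 in Hh by (simpl; ring).
    assert (0 <= INR (2 * h + 1)) by apply pos_INR. nra. }
  assert (0 <= delta k S).
  { unfold delta; destruct (cones S); [lra|].
    unfold Rdiv; apply Rmult_le_pos; [apply pos_INR|].
    apply Rlt_le, Rinv_0_lt_compat, lt_0_INR; simpl; lia. }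
  rewrite HK.
  apply Rmult_lt_reg_r with (4096 * K * K); [nra|].
  replace (mu / (4096 * K * K) * (4096 * K * K)) with mu by (field; lra).
  assert (0 < INR M * INR M) by nra.
  apply Rmult_lt_reg_r with (INR M * INR M); [lra|].
  assert (HKM : 0 < K * K * (INR M * INR M)) by nra.
  nra.
Qed.

Lemma prob_delta_gt k p h M : (2 <= k)%Z -> 0 < p < 1 -> (1 <= M)%nat ->
  (4 * Z.to_nat k * M <= h)%nat -> (h < 4 * Z.to_nat k * (M + 1))%nat ->
  prob_T h p (fun S => gtb (delta k S) (p * p * (1 - p) / (4096 * IZR k * IZR k)))
  >= 1 - 16 / (INR M * INR M * (p * p * (1 - p)) ^ 2).
Proof.
  intros Hk Hp HM H1 H2. set (mu := p * p * (1 - p)). set (c := mu / (4096 * IZR k * IZR k)).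
  assert (Hmu : 0 < mu) by (unfold mu; apply Rmult_lt_0_compat; nra).
  destruct (singular_triples_for_middle_rays h k M Hk H1) as [T [HTm HT]].
  assert (Hn : NoDup (map mid T)) by (rewrite HTm; apply NoDup_middle_rays).
  assert (HnM : INR M * INR M <= 4 * INR (length T)).
  { rewrite <- (length_map mid T), HTm. unfold middle_rays; rewrite length_map.
    apply count_coprime_pairs. }
  assert (HM1 : 1 <= INR M) by (apply (le_INR 1); auto).
  assert (Hlen : (0 < length T)%nat) by (apply INR_lt; simpl; nra).
  assert (Hn0 : 0 < INR (length T)) by (apply lt_0_INR; auto).
  set (few := fun S => gtb (INR (length T) * mu / 2) (num_missing_middle T S)).
  assert (Hfew : expect p (rays_upto h) (fun S => indb (few S)) <= 16 / (INR M * INR M * mu ^ 2)).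
  { eapply Rle_trans; [apply (prob_few_missing_middle h k T Hk HT Hn p Hp Hlen)|]; fold mu.
    apply Rmult_le_reg_r with (INR (length T) * (INR M * INR M) * mu ^ 2);
      [apply Rmult_lt_0_compat; [apply Rmult_lt_0_compat|]; nra|].
    replace (4 / (INR (length T) * mu ^ 2) * (INR (length T) * (INR M * INR M) * mu ^ 2))
      with (4 * (INR M * INR M)) by (field; nra).
    replace (16 / (INR M * INR M * mu ^ 2) * (INR (length T) * (INR M * INR M) * mu ^ 2))
      with (16 * INR (length T)) by (field; nra).
    lra. }
  assert (Hgood : expect p (rays_upto h) (fun S => 1 - indb (few S)) <=
                  expect p (rays_upto h) (fun S => indb (gtb (delta k S) c))).
  { apply expect_le; [lra|]. intros S HS. apply subsets_incl in HS as [HS1 HS2].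
    pose proof (indb_bounds (gtb (delta k S) c)).
    unfold few, gtb at 1; destruct Rlt_dec as [Hb|Hb]; simpl; [lra|].
    assert (Hd : c < delta k S).
    { apply (delta_gt_of_many_missing_middle h k M T S mu); auto using NoDup_rays_upto; [nia|nra]. }
    unfold gtb; destruct Rlt_dec; [simpl; lra | contradiction]. }
  rewrite expect_minus, expect_const in Hgood.
  rewrite prob_T_expect. lra.
Qed.

Lemma div_bracket a b : (b <> 0)%nat -> (b * (a / b) <= a < b * (a / b + 1))%nat.
Proof.
  intros Hb; split; [apply Nat.Div0.mul_div_le|].
  rewrite Nat.add_1_r; apply Nat.mul_succ_div_gt; auto.
Qed.

Lemma div_sqr_le_of_lt C eps x : 0 < C -> 0 < eps -> C / eps < x -> 1 <= x ->
  C / (x * x) <= eps.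
Proof.
  intros HC He Hx H1.
  apply Rmult_le_reg_r with (x * x); [nra|].
  replace (C / (x * x) * (x * x)) with C by (field; lra).
  assert (C / eps * eps = C) by (field; lra).
  assert (C / eps * eps <= x * eps) by (apply Rmult_le_compat_r; lra).
  nra.
Qed.

Theorem theorem2 :
  forall (k : Z) (q : R), (1 < k)%Z -> 0 < q < 1 ->
  exists c : R, c > 0 /\
    forall eps : R, eps > 0 ->
      exists H : nat, forall h : nat, (H <= h)%nat ->
        prob_T h (1 - q) (fun S => gtb (delta k S) c) >= 1 - eps.
Proof.
  intros k q Hk Hq. set (p := 1 - q). set (mu := p * p * (1 - p)).
  assert (Hmu : 0 < mu) by (unfold mu, p; apply Rmult_lt_0_compat; nra).
  assert (Hk0 : 0 < IZR k) by (apply IZR_lt; lia).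
  exists (mu / (4096 * IZR k * IZR k)); split; [apply Rlt_gt, Rdiv_lt_0_compat; nra|].
  intros eps Heps. set (C := 16 / mu ^ 2).
  assert (HC : 0 < C) by (apply Rdiv_lt_0_compat; [lra | apply pow_lt; lra]).
  destruct (INR_unbounded (C / eps)) as [M0 HM0].
  set (K4 := (4 * Z.to_nat k)%nat). exists (K4 * S M0)%nat; intros h Hh.
  destruct (div_bracket h K4 ltac:(lia)) as [H1 H2].
  assert (HM : (S M0 <= h / K4)%nat) by (apply Nat.div_le_lower_bound; lia).
  pose proof (prob_delta_gt k p h (h / K4) ltac:(lia) ltac:(unfold p; lra) ltac:(lia) H1 H2)
    as Hprob.
  apply le_INR in HM; rewrite S_INR in HM. pose proof (pos_INR M0).
  set (M := INR (h / K4)) in *. fold mu in Hprob.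
  replace (16 / (M * M * mu ^ 2)) with (C / (M * M)) in Hprob by (unfold C; field; nra).
  assert (C / (M * M) <= eps) by (apply div_sqr_le_of_lt; lra).
  lra.
Qed.
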